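(* Let $\mathcal{A}\subset[\mathbb{N}]^{<\infty}$ be hereditary and compact, let $P\subset\mathbb{N}$ be infinite and $\alpha<\omega_1$. Then $\mathcal{A}$ is $\alpha$-large on $P$ if and only if $\mathrm{CB}(\mathcal{A}\cap[Q]^{<\infty})\ge\alpha+1$ for every infinite $Q\subset P$.
   Context: $[M]^{<\infty}$ = finite subsets of $M$, with the topology of pointwise convergence of characteristic functions. For hereditary compact $\mathcal{A}$: $\mathcal{A}^{(1)}=\{A\in\mathcal{A}:\exists N\subset\mathbb{N}\text{ infinite},\ \forall n\in N\ A\cup\{n\}\in\mathcal{A}\}$, $\mathcal{A}^{(0)}=\mathcal{A}$, $\mathcal{A}^{(\beta+1)}=(\mathcal{A}^{(\beta)})^{(1)}$, $\mathcal{A}^{(\alpha)}=\bigcap_{\beta<\alpha}\mathcal{A}^{(\beta)}$ for limit $\alpha$, and $\mathrm{CB}(\mathcal{A})=\min\{\alpha<\omega_1:\mathcal{A}^{(\alpha)}=\emptyset\}$. Transfinite family: given finite sets $A_n(\alpha)\subset[0,\alpha)$ for each countable limit $\alpha$, increasing in $n$ with $\max A_n(\alpha)\to\alpha$, set $\mathcal{F}_0=\{\emptyset\}$, $\mathcal{F}_{\beta+1}=\{\{n\}\cup E:n\in\mathbb{N},E\in\mathcal{F}_\beta\}\cup\{\emptyset\}$, and for limit $\alpha$, $\mathcal{F}_\alpha=\{\emptyset\}\cup\{E\ne\emptyset:E\in\bigcup_{\beta\in A_{\min E}(\alpha)}\mathcal{F}_\beta\}$. For $N=\{n_1<n_2<\dots\}$,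 $\mathcal{F}^N=\{\{n_i:i\in E\}:E\in\mathcal{F}\}$. $\mathcal{A}$ is $\alpha$-large on $P$ if every infinite $M\subset P$ contains an infinite $N$ with $\mathcal{F}_\alpha^N\subset\mathcal{A}$ (this is independent of the chosen transfinite family). *)

From HB Require Import structures.
From mathcomp Require Import all_boot all_order all_algebra finmap.
From mathcomp Require Import boolp classical_sets functions cardinality.
From mathcomp Require Import topology cantor.
From Stdlib Require Import List.

Set Implicit Arguments.
Unset Strict Implicit.
Unset Printing Implicit Defensive.

Local Open Scope classical_set_scope.

Definition nfamily := set {fset nat}.

Definition chi (E : {fset nat}) : cantor_space := fun n => n \in E.

(** compactness in the topology of pointwise convergence of characteristic
    functions, i.e. in the subspace topology of [N]^{<oo} inside 2^N *)
Definition fam_compact (A : nfamily) : Prop := compact (chi @` A).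

Definition hereditary (A : nfamily) : Prop :=
  forall E F : {fset nat}, A E -> (F `<=` E)%fset -> A F.

Definition restrict (A : nfamily) (Q : set nat) : nfamily :=
  fun E => A E /\ (forall n, n \in E -> Q n).

(** F^N : for N = {n_0 < n_1 < ...}, the nfamily {{n_i : i in E} : E in F};
    [e] is the increasing enumeration of N. *)
Definition spread (N : set nat) (F : nfamily) : nfamily :=
  fun E' => exists e : nat -> nat,
      (forall i j, (i < j)%N -> (e i < e j)%N) /\
      (forall m, N m <-> exists i, e i = m) /\
      exists E, F E /\ E' = [fset e i | i in E]%fset.

(** [lt] is a strict well-order on [O] in which every initial segment is
    countable and every countable subset has a strict upper bound; such an
    order is isomorphic to omega_1 (the set of countable ordinals). *)
Record is_omega1 (O : Type) (lt : O -> O -> Prop) : Prop := {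
  o1_irrefl : forall a, ~ lt a a;
  o1_trans : forall a b c, lt a b -> lt b c -> lt a c;
  o1_total : forall a b, lt a b \/ a = b \/ lt b a;
  o1_wf : well_founded lt;
  o1_countable_segments : forall a, countable [set b | lt b a];
  o1_unbounded : forall S : set O, countable S -> exists u, forall s, S s -> lt s u
}.

Section Ordinals.
Variables (O : Type) (lt : O -> O -> Prop).

Definition is_zero (a : O) : Prop := forall b, ~ lt b a.
(** a = b + 1 *)
Definition succ_of (b a : O) : Prop :=
  lt b a /\ forall c, lt b c -> lt c a -> False.
Definition is_limit (a : O) : Prop :=
  ~ is_zero a /\ forall b, lt b a -> exists c, lt b c /\ lt c a.

(** Cantor–Bendixson derivatives A^(a), by transfinite recursion
    (least solution of the recursive clauses; unique since lt is well founded) *)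
Inductive derived (A : nfamily) : O -> {fset nat} -> Prop :=
| derived_zero a E : is_zero a -> A E -> derived A a E
| derived_succ b a E : succ_of b a ->
    derived A b E ->
    (exists N : set nat, infinite_set N /\ forall n, N n -> derived A b (n |` E)%fset) ->
    derived A a E
| derived_limit a E : is_limit a -> (forall b, lt b a -> derived A b E) ->
    derived A a E.

Definition is_CB (A : nfamily) (g : O) : Prop :=
  (forall E, ~ derived A g E) /\
  (forall d, lt d g -> exists E, derived A d E).

(** CB(A) >= a + 1, i.e. CB(A) > a *)
Definition CB_ge_succ (A : nfamily) (a : O) : Prop :=
  exists g, is_CB A g /\ lt a g.

Definition is_tf_data (An : nat -> O -> list O) : Prop :=
  forall a, is_limit a ->
    (forall n b, In b (An n a) -> lt b a) /\
    (forall n b, In b (An n a) -> In b (An n.+1 a)) /\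
    (forall b, lt b a -> exists N, forall n, (N <= n)%N ->
         exists c, In c (An n a) /\ lt b c).

Inductive tfam (An : nat -> O -> list O) : O -> {fset nat} -> Prop :=
| tfam_zero a : is_zero a -> tfam An a fset0
| tfam_succ_empty b a : succ_of b a -> tfam An a fset0
| tfam_succ b a n E : succ_of b a -> tfam An b E -> tfam An a (n |` E)%fset
| tfam_limit_empty a : is_limit a -> tfam An a fset0
| tfam_limit a E b m : is_limit a -> E <> fset0 ->
    m \in E -> (forall x, x \in E -> (m <= x)%N) ->
    In b (An m a) -> tfam An b E -> tfam An a E.

Definition large (An : nat -> O -> list O) (A : nfamily) (a : O) (P : set nat) : Prop :=
  forall M : set nat, M `<=` P -> infinite_set M ->
    exists N : set nat, N `<=` M /\ infinite_set N /\
      spread N (tfam An a) `<=` A.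

End Ordinals.

(* If [F_a^N] lies in [A] for some infinite [N] inside [Q], the a-th derivative
   of [A] restricted to [Q] contains the empty set, because [F_a] has
   Cantor-Bendixson rank a + 1 and spreading preserves this; compactness of [A]
   makes the index of every subfamily countable (a set surviving all countable
   stages would start an increasing chain in [A] with infinite union), so this
   index exceeds a.
   Conversely, a Ramsey-type dichotomy is proved by transfinite induction on b:
   every infinite [M] contains an infinite [N] such that either [F_b^N] lies in
   [A] or the b-th derivative of [A] restricted to [N] misses the empty set.  At
   a successor, the induction hypothesis is applied, for every j, to the family
   [{G | {n_j} ∪ G ∈ A}] beyond [n_j], diagonally in j, keeping afterwards
   either infinitely many good indices or cofinitely many bad ones; at a limit
   the same is done with the finitely many levels [An j a].  For b = a the
   second alternative contradicts the Cantor-Bendixson hypothesis on [N]. *)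

From mathcomp Require Import all_boot finmap boolp classical_sets.
From mathcomp Require Import cardinality topology cantor.

Set Implicit Arguments.
Unset Strict Implicit.
Unset Printing Implicit Defensive.

Local Open Scope classical_set_scope.
Local Open Scope fset_scope.
Local Open Scope nat_scope.

Lemma finite_nat_ub (N : set nat) : finite_set N -> exists n, forall m, N m -> m < n.
Proof.
move=> /finite_fsetP [X ->]; exists (\max_(x <- X) x).+1 => m /= mX.
by rewrite ltnS (@leq_bigmax_seq _ _ xpredT id).
Qed.

Lemma infinite_natP (N : set nat) :
  infinite_set N <-> forall n, exists2 m, N m & n <= m.
Proof.
split=> [infN n|unbN /finite_nat_ub [n ub]]; last first.
  by have [m /ub] := unbN n; rewrite ltnNge => /negP.
apply: contra_notP infN => noN; apply: (@sub_finite_set _ _ `I_n) => // m Nm /=.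
by rewrite ltnNge; apply/negP => nm; apply: noN; exists m.
Qed.

Lemma homo_ltn_geq (e : nat -> nat) : {homo e : i j / i < j} -> forall n, n <= e n.
Proof. by move=> incr_e; elim=> // n IHn; apply: leq_ltn_trans IHn (incr_e _ _ _). Qed.

Lemma homo_ltn_range_infinite (e : nat -> nat) :
  {homo e : i j / i < j} -> infinite_set (range e).
Proof.
by move=> incr_e; apply/infinite_natP => n; exists (e n); [exists n|apply: homo_ltn_geq].
Qed.

Lemma infinite_setI_geq (k : nat) (N : set nat) :
  infinite_set N -> infinite_set (N `&` [set n | k <= n])%classic.
Proof.
move=> /infinite_natP unbN; apply/infinite_natP => n; have [m Nm nm] := unbN (maxn n k).
by exists m; [split=> //=|]; apply: leq_trans nm; rewrite ?leq_maxr ?leq_maxl.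
Qed.

Section IncreasingEnumeration.
Variables (N : set nat) (infN : infinite_set N).

Let above n : exists m, `[< N m >] && (n <= m).
Proof. by have [m Nm nm] := (infinite_natP N).1 infN n; exists m; rewrite nm andbT asboolT. Qed.

Let next n := ex_minn (above n).

Let nextP n : [/\ N (next n), n <= next n & forall m, N m -> n <= m -> next n <= m].
Proof.
rewrite /next; case: ex_minnP => m /andP [/asboolP Nm nm] min_m.
by split=> // x Nx nx; apply: min_m; rewrite nx asboolT.
Qed.

Let enum i : nat := iter i (fun x => next x.+1) (next 0).

Lemma increasing_enumeration : exists e, {homo e : i j / i < j} /\ range e = N.
Proof.
have enumS i : enum i.+1 = next (enum i).+1 by [].
have incr_enum : {homo enum : i j / i < j}.
  by apply: homo_ltn => [y x z|i]; [apply: ltn_trans|case: (nextP (enum i).+1)].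
exists enum; split => //; apply/seteqP; split=> [_ [[|i] _ <-]|m Nm].
- by case: (nextP 0).
- by case: (nextP (enum i).+1).
suff covered t x : N x -> x < enum t -> range enum x.
  by apply: (covered m.+1) => //; apply: homo_ltn_geq.
elim: t x => [|t IHt] x Nx.
  by case: (nextP 0) => _ _ /(_ x Nx (leq0n x)); rewrite leqNgt => /negbTE ->.
rewrite enumS; case: (ltngtP x (enum t)) => [/(IHt x Nx)//|xt|->]; last by exists t.
by case: (nextP (enum t).+1) => _ _ /(_ x Nx xt); rewrite leqNgt => /negbTE ->.
Qed.

End IncreasingEnumeration.

Lemma homo_ltn_factor (e e' : nat -> nat) :
  {homo e : i j / i < j} -> {homo e' : i j / i < j} ->
  (range e' `<=` range e)%classic ->
  exists2 g : nat -> nat, {homo g : i j / i < j} & e' =1 e \o g.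
Proof.
move=> incr_e incr_e' sub_e; have /choice [g eg] i : exists j, e j = e' i.
  by have [j _] := sub_e _ (imageT e' i); exists j.
exists g => [i j ij|i] /=; last by rewrite eg.
by rewrite -(leqW_mono (leq_mono incr_e)) !eg; apply: incr_e'.
Qed.

Lemma increasing_into_from (S : set nat) (k : nat) : infinite_set S ->
  exists2 s : nat -> nat, {homo s : i j / i < j} &
    (forall i, i < k -> s i = i) /\ (forall i, k <= i -> S (s i) /\ k <= s i).
Proof.
move=> /(@infinite_setI_geq k) /increasing_enumeration [t [incr_t rg_t]].
have St i : (S `&` [set m | k <= m])%classic (t i) by rewrite -rg_t; exists i.
exists (fun i => if i < k then i else t (i - k)); last first.
  by split=> i; [move=> -> | rewrite ltnNge => ->; apply: St].
move=> i j ij; case: (ltnP i k) => [ik|ki]; case: (ltnP j k) => [jk|kj] //.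
- exact: leq_trans ik (St _).2.
- by have := leq_ltn_trans ki (ltn_trans ij jk); rewrite ltnn.
- by apply: incr_t; rewrite ltn_sub2r // (leq_ltn_trans ki ij).
Qed.

(* Subsequences are increasing maps; keeping the first [k] terms fixed is what
   lets the diagonal limit in [fusion] exist. *)
Definition refines (k : nat) (e e' : nat -> nat) : Prop :=
  [/\ {homo e' : i j / i < j}, (range e' `<=` range e)%classic &
      forall i, i < k -> e' i = e i].

Lemma refines_refl k e : {homo e : i j / i < j} -> refines k e e.
Proof. by split. Qed.

Lemma refines_trans k e1 e2 e3 : refines k e1 e2 -> refines k e2 e3 -> refines k e1 e3.
Proof.
case=> _ sub12 eq12 [incr3 sub23 eq23]; split=> // [|i ik].
  exact: subset_trans sub23 sub12.
by rewrite eq23 // eq12.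
Qed.

Lemma refines_leq k l e e' : k <= l -> refines l e e' -> refines k e e'.
Proof. by move=> kl [? ? agree]; split=> // i ik; apply/agree/(leq_trans ik). Qed.

Lemma refines_comp k e e' s : refines k e e' -> {homo s : i j / i < j} ->
  (forall i, i < k -> s i = i) -> refines k e (e' \o s).
Proof.
move=> [incr_e' sub_e' agree] incr_s s_id; split=> [i j ij|_ [i _ <-]|i ik] /=.
- by apply/incr_e'/incr_s.
- by apply: sub_e'; exists (s i).
- by rewrite s_id // agree.
Qed.

Section Fusion.
Variables (Phi : nat -> (nat -> nat) -> Prop) (k : nat).
Hypothesis Phi_refines : forall j e e', {homo e : i j / i < j} ->
  refines j.+1 e e' -> Phi j e -> Phi j e'.
Hypothesis Phi_step : forall j e, {homo e : i j / i < j} ->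
  exists e', refines j e e' /\ Phi j e'.

Lemma fusion e : {homo e : i j / i < j} ->
  exists e', refines k e e' /\ forall j, k <= j -> Phi j e'.
Proof.
move=> incr_e.
have /choice [step stepP] (p : nat * (nat -> nat)) : exists e', {homo p.2 : i j / i < j} ->
    refines p.1 p.2 e' /\ Phi p.1 e'.
  by have [incr_p|] := pselect {homo p.2 : i j / i < j};
    [have [e' ?] := Phi_step p.1 incr_p; exists e' | exists p.2].
pose E := fix E n := if n is n'.+1 then step (n' + k, E n') else e.
have E_step n : refines (n + k) (E n) (E n.+1) /\ Phi (n + k) (E n.+1).
  by elim: n => [|n [[? _ _] _]]; apply: (stepP (_, _)).
have incrE n : {homo E n : i j / i < j} by case: n => // n; case: (E_step n) => [[]].
have E_agree n m i : n <= m -> i < n + k -> E m i = E n i.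
  move=> /subnK <-; elim: (m - n) => [|d IHd] ilt //.
  have [[_ _ agree] _] := E_step (d + n).
  rewrite addSn agree; first exact: IHd.
  by apply: leq_trans ilt _; rewrite leq_add2r leq_addl.
have E_range n m : n <= m -> (range (E m) `<=` range (E n))%classic.
  move=> /subnK <-; elim: (m - n) => [|d IHd] //.
  by case: (E_step (d + n)) => [[_ sub _] _]; apply: subset_trans sub IHd.
pose einf i := E i.+1 i.
have einfE n i : i < n + k -> einf i = E n i.
  move=> ilt; rewrite /einf -(E_agree i.+1 (maxn i.+1 n)) ?leq_maxl ?ltn_addr //.
  by rewrite (E_agree n) ?leq_maxr.
have einf_refines n : refines (n + k) (E n) einf.
  split=> [i j ij|_ [i _ <-]|]; last exact: einfE.
    by rewrite (einfE j.+1 i) ?(einfE j.+1 j) ?incrE ?ltn_addr // (ltn_trans ij).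
  apply: (E_range n (maxn i.+1 n)); first exact: leq_maxr.
  by exists i => //; rewrite (einfE (maxn i.+1 n)) // ltn_addr // leq_maxl.
exists einf; split=> [|j kj]; first exact: einf_refines 0.
apply: (Phi_refines (e := E (j - k).+1)); first exact: incrE.
  by have := einf_refines (j - k).+1; rewrite addSn subnK.
by have [_] := E_step (j - k); rewrite subnK.
Qed.

End Fusion.

Lemma cantor_nbhs_coord (p : cantor_space) (n : nat) :
  nbhs p [set q : cantor_space | q n = p n]%classic.
Proof.
apply: (@proj_continuous nat (fun _ => bool) n p [set p n]%classic).
by rewrite nbhs_principalE; apply/principal_filterP.
Qed.

(* A cluster point [chi G] of the chain contains each point that eventually
   belongs to the chain, because agreement at one coordinate is open. *)
Lemma fam_compact_chain_bounded (A : nfamily) (E : nat -> {fset nat}) :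
  fam_compact A -> (forall k, A (E k)) -> (forall k, E k `<=` E k.+1) ->
  exists G, forall k, E k `<=` G.
Proof.
move=> cA AE E_step.
have E_mono : {homo E : k l / k <= l >-> k `<=` l}.
  exact: homo_leq (@fsubset_refl _) (@fsubset_trans _) E_step.
pose F := (fun k => chi (E k)) @ \oo.
have FA : F (chi @` A)%classic.
  suff : \oo (fun k => (chi @` A)%classic (chi (E k))) by [].
  by apply: filterE => k; exists (E k).
have [_ [[G AG <-] clusterG]] := cA F (fmap_proper_filter _ _) FA.
exists G => k; apply/fsubsetP => n nEk.
have tailF : F ((fun l => chi (E l)) @` [set l | k <= l])%classic.
  by exists k => // l /= kl; exists l.
have [_ [[l /= kl <-]]] := clusterG _ _ tailF (cantor_nbhs_coord (chi G) n).
by rewrite /chi => <-; apply: (fsubsetP (E_mono _ _ kl)).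
Qed.

Section Ordinals.
Variables (O : Type) (lt : O -> O -> Prop) (HO : is_omega1 lt).

Lemma ordinal_cases a : is_zero lt a \/ (exists b, succ_of lt b a) \/ is_limit lt a.
Proof.
have [z|nz] := pselect (is_zero lt a); first by left.
right; have [l|nl] := pselect (is_limit lt a); [by right | left].
apply: contra_notP nl => not_succ; split=> // b ba.
apply: contra_notP not_succ => no_between; exists b.
by split=> // c bc ca; apply: no_between; exists c.
Qed.

Lemma succ_not_zero b a : succ_of lt b a -> ~ is_zero lt a.
Proof. by move=> [ba _] /(_ b). Qed.

Lemma succ_not_limit b a : succ_of lt b a -> ~ is_limit lt a.
Proof. by move=> [ba between] [_ /(_ b ba) [c [bc ca]]]; apply: between bc ca. Qed.

Lemma succ_of_inj b b' a : succ_of lt b a -> succ_of lt b' a -> b = b'.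
Proof.
move=> [ba between] [b'a between']; have [bb'|[//|b'b]] := o1_total HO b b'.
- by case: (between _ bb' b'a).
- by case: (between' _ b'b ba).
Qed.

Lemma lt_succ b a c : succ_of lt b a -> lt c a -> c = b \/ lt c b.
Proof.
move=> [_ between] ca; have [|[|bc]] := o1_total HO c b; [by right | by left |].
by case: (between _ bc ca).
Qed.

Lemma limit_gt a : is_limit lt a -> exists b, lt b a.
Proof. by move=> [nz _]; apply: contra_notP nz => no_lt b ba; apply: no_lt; exists b. Qed.

Lemma exists_minimal (P : O -> Prop) :
  (exists x, P x) -> exists x, P x /\ forall y, P y -> ~ lt y x.
Proof.
move=> [x Px]; apply: contrapT => no_min.
suff : forall z, ~ P z by move/(_ x).
elim/(well_founded_ind (o1_wf HO)) => z IHz Pz.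
by apply: no_min; exists z; split=> // y Py /IHz.
Qed.

Lemma exists_succ b : exists a, succ_of lt b a.
Proof.
have [u bu] := o1_unbounded HO (countable1 b).
have [a [ba min_a]] := @exists_minimal (lt b) (ex_intro _ u (bu b erefl)).
by exists a; split=> // c bc /(min_a c bc).
Qed.

Lemma countable_ub (T : countType) (h : T -> O) : exists u, forall x, lt (h x) u.
Proof.
have [u hu] := o1_unbounded HO (card_le_trans (card_image_le h setT) (countableP _)).
by exists u => x; apply: hu; exists x.
Qed.

End Ordinals.

Section Derivatives.
Variables (O : Type) (lt : O -> O -> Prop) (HO : is_omega1 lt).
Implicit Types (B C : nfamily) (a b : O) (E S T : {fset nat}).

Lemma derived_cases B a E : derived lt B a E ->
  [\/ is_zero lt a /\ B E,
      exists b, [/\ succ_of lt b a, derived lt B b E &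
        exists2 N : set nat, infinite_set N & forall n, N n -> derived lt B b (n |` E)]
    | is_limit lt a /\ forall b, lt b a -> derived lt B b E].
Proof.
case=> [a' E' z BE|b a' E' sba dbE [N [infN ext]]|a' E' la below].
- exact: Or31 (conj z BE).
- by apply: Or32; exists b; split=> //; exists N.
- exact: Or33 (conj la below).
Qed.

(* Only extensions by points [n >= K] need to be related, since an infinite set
   of witnesses stays infinite above [K]. *)
Lemma derived_transport B C (R : {fset nat} -> {fset nat} -> Prop) (K : nat) :
  (forall T S, R T S -> B T -> C S) ->
  (forall T S n, K <= n -> R T S -> R (n |` T) (n |` S)) ->
  forall a T S, R T S -> derived lt B a T -> derived lt C a S.
Proof.
move=> RBC R_ext a; elim/(well_founded_ind (o1_wf HO)): a => a IHa T S RTS.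
case/derived_cases=> [[z BT]|[b [sba dbT [N infN ext]]]|[la below]].
- by apply: derived_zero => //; apply: RBC BT.
- apply: (derived_succ sba); first exact: IHa sba.1 _ _ RTS dbT.
  exists (N `&` [set n | K <= n])%classic; split=> [|n [Nn Kn]].
    exact: infinite_setI_geq.
  exact: IHa sba.1 _ _ (R_ext _ _ _ Kn RTS) (ext n Nn).
- by apply: derived_limit => // b ba; apply: IHa ba _ _ RTS (below b ba).
Qed.

Lemma derived_sub B a E : derived lt B a E -> B E.
Proof.
elim/(well_founded_ind (o1_wf HO)): a E => a IHa E.
case/derived_cases=> [[_ //]|[b [sba dbE _]]|[la below]]; first exact: IHa sba.1 _ dbE.
by have [b ba] := limit_gt la; apply: IHa ba _ (below b ba).
Qed.

Lemma derived_lt B a b E : derived lt B a E -> lt b a -> derived lt B b E.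
Proof.
elim/(well_founded_ind (o1_wf HO)): a E => a IHa E.
case/derived_cases=> [[z _]|[c [sca dcE _]]|[_ below]] ba; first by case: (z b ba).
  by have [->|bc] := lt_succ HO sca ba; last exact: IHa sca.1 _ dcE bc.
exact: below.
Qed.

Lemma derived_succ_ext B b a E : derived lt B a E -> succ_of lt b a ->
  exists2 N : set nat, infinite_set N & forall n, N n -> derived lt B b (n |` E).
Proof.
case/derived_cases=> [[z _]|[b' [sb'a _ ext]]|[la _]] sba.
- by case: (succ_not_zero sba z).
- by rewrite (succ_of_inj HO sba sb'a).
- by case: (succ_not_limit sba la).
Qed.

Lemma derived_subset B C a E : (B `<=` C)%classic -> derived lt B a E -> derived lt C a E.
Proof. by move=> BC; apply: (@derived_transport B C eq 0) => [T S -> /BC|T S n _ ->|]. Qed.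

Lemma derived_hereditary B a E F : hereditary B -> derived lt B a E -> F `<=` E ->
  derived lt B a F.
Proof.
move=> herB dE FE; apply: (@derived_transport B B (fun T S => S `<=` T) 0) FE dE.
- by move=> T S ST BT; apply: herB BT ST.
- by move=> T S n _ ST; apply: fsetUS.
Qed.

Lemma derived_fsetU1 B a x S :
  derived lt B a (x |` S) -> derived lt (fun G => B (x |` G)) a S.
Proof.
apply: (@derived_transport B _ (fun T S => T = x |` S) 0) => // [T S' -> //|].
by move=> T S' n _ ->; rewrite fsetUCA.
Qed.

Lemma derived_restrict_geq B a S K : derived lt B a S -> (forall y, y \in S -> K <= y) ->
  derived lt (restrict B [set y | K <= y]%classic) a S.
Proof.
move=> dS geqS.
apply: (@derived_transport B _ (fun T S' => T = S' /\ forall y, y \in S' -> K <= y) K) dS => //.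
- by move=> T S' [-> ?] BS.
- by move=> T S' n Kn [-> geqS']; split=> // y; rewrite !inE => /orP [/eqP ->|/geqS'].
Qed.

End Derivatives.

Section CantorBendixsonIndex.
Variables (O : Type) (lt : O -> O -> Prop) (HO : is_omega1 lt) (B : nfamily).
Hypothesis derived_nonempty : forall g, exists E, derived lt B g E.

Let kernel E := forall g, derived lt B g E.

(* If no set lay in every derivative, a common upper bound of the countably many
   stages at which the finite sets drop out would have an empty derivative. *)
Let kernel_nonempty : exists E, kernel E.
Proof.
apply: contrapT => no_kernel.
have /choice [h hE] E : exists g, ~ derived lt B g E.
  apply: contrapT => dE; apply: no_kernel; exists E => g.
  by apply: contrapT => ndE; apply: dE; exists g.
have [u hu] := countable_ub HO h; have [E dE] := derived_nonempty u.
exact: hE E (derived_lt HO dE (hu E)).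
Qed.

Let kernel_ext E : kernel E -> exists n, n \notin E /\ kernel (n |` E).
Proof.
move=> kerE; apply: contrapT => no_ext.
have /choice [h hE] (n : {n | n \notin E}) : exists g, ~ derived lt B g (val n |` E).
  apply: contrapT => dnE; apply: no_ext; exists (val n); split; first exact: (svalP n).
  by move=> g; apply: contrapT => ndnE; apply: dnE; exists g.
have [u hu] := countable_ub HO h; have [u' su'] := exists_succ HO u.
have [N infN ext] := derived_succ_ext HO (kerE u') su'.
have [n [Nn /negP nE]] : (N `\` [set` E])%classic !=set0.
  by apply/infinite_setN0/infinite_setD => //; apply: finite_fset.
exact: hE (exist _ n nE) (derived_lt HO (ext n Nn) (hu _)).
Qed.

Lemma derived_nonempty_not_compact (A : nfamily) :
  fam_compact A -> (B `<=` A)%classic -> False.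
Proof.
move=> cA BA; have [E0 kerE0] := kernel_nonempty.
have /choice [next nextP] E : exists n, kernel E -> n \notin E /\ kernel (n |` E).
  by have [/kernel_ext [n ?]|] := pselect (kernel E); [exists n | exists 0].
pose C k := iter k (fun E => next E |` E) E0.
have kerC k : kernel (C k) by elim: k => // k IHk; apply: (nextP _ IHk).2.
have sizeC k : k <= #|` C k|.
  by elim: k => // k IHk; rewrite /= cardfsU1 (nextP _ (kerC k)).1.
have [g0 _] := o1_unbounded HO (countable0 O).
have [G CG] := fam_compact_chain_bounded cA
  (fun k => BA _ (derived_sub HO (kerC k g0))) (fun k => fsubsetUr _ _).
by have := leq_trans (sizeC #|` G|.+1) (fsubset_leq_card (CG _)); rewrite ltnn.
Qed.

End CantorBendixsonIndex.

Lemma CB_exists (O : Type) (lt : O -> O -> Prop) (A B : nfamily) :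
  is_omega1 lt -> fam_compact A -> (B `<=` A)%classic -> exists g, is_CB lt B g.
Proof.
move=> HO cA BA; pose empty g := forall E, ~ derived lt B g E.
have [[g0 empty_g0]|no_empty] := pselect (exists g, empty g).
  have [g [empty_g min_g]] := exists_minimal HO (ex_intro empty g0 empty_g0).
  exists g; split=> // d dg; apply: contrapT => empty_d; apply: (min_g d) dg => E dE.
  by apply: empty_d; exists E.
case: (derived_nonempty_not_compact HO _ cA BA) => g.
by apply: contrapT => nonempty_g; apply: no_empty; exists g => E dE; apply: nonempty_g; exists E.
Qed.

Lemma CB_ge_succ_derived (O : Type) (lt : O -> O -> Prop) (A B : nfamily) a E :
  is_omega1 lt -> fam_compact A -> (B `<=` A)%classic ->
  derived lt B a E -> CB_ge_succ lt B a.
Proof.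
move=> HO cA BA dE; have [g [empty_g lt_g]] := CB_exists HO cA BA.
exists g; split=> //; have [//|[ag|ga]] := o1_total HO a g.
  by case: (empty_g E); rewrite -ag.
by case: (empty_g _ (derived_lt HO dE ga)).
Qed.

Lemma fset_nat_min (E : {fset nat}) :
  E != fset0 -> exists2 m, m \in E & forall x, x \in E -> m <= x.
Proof.
by case/fset0Pn=> x xE; case: (ex_minnP (ex_intro (fun n => n \in E) x xE)) => m; exists m.
Qed.

Section TransfiniteFamily.
Variables (O : Type) (lt : O -> O -> Prop) (HO : is_omega1 lt).
Variables (An : nat -> O -> list O) (HAn : is_tf_data lt An).
Implicit Types (a b : O) (E F : {fset nat}).

Lemma tf_data_mono a m n b : is_limit lt a -> m <= n -> List.In b (An m a) -> List.In b (An n a).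
Proof.
move=> la /subnK <-; elim: (n - m) => // d IHd /IHd.
exact: (HAn la).2.1.
Qed.

Lemma tfam0 a : tfam lt An a fset0.
Proof.
have [z|[[b sba]|la]] := ordinal_cases lt a.
- exact: tfam_zero.
- exact: tfam_succ_empty sba.
- exact: tfam_limit_empty.
Qed.

Lemma tfam_spreading a E (f : nat -> nat) : {homo f : i j / i < j} ->
  tfam lt An a E -> tfam lt An a (f @` E).
Proof.
move=> incr_f tE; elim: tE => {a E}
  [a z|b a sba|b a n E sba _ IH|a la|a E b m la nE mE min_m inb _ IH].
- by rewrite imfset0; apply: tfam_zero.
- by rewrite imfset0; apply: tfam_succ_empty sba.
- by rewrite imfsetU1; apply: tfam_succ sba IH.
- by rewrite imfset0; apply: tfam_limit_empty.
apply: (@tfam_limit _ _ _ _ _ b (f m) la) => //.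
- by move/eqP; apply/negP/fset0Pn; exists (f m); apply: in_imfset.
- exact: in_imfset.
- by move=> _ /imfsetP [x /= xE ->]; rewrite (leq_mono incr_f) min_m.
- exact: tf_data_mono la (homo_ltn_geq incr_f m) inb.
Qed.

Lemma tfam_succ_sub b a E : succ_of lt b a -> tfam lt An b E -> tfam lt An a E.
Proof.
move=> sba tE; have [->|/fset_nat_min [x xE _]] := eqVneq E fset0; first exact: tfam0.
have -> : E = x |` E by apply/esym/fsetUidPr; rewrite fsub1set.
exact: tfam_succ sba tE.
Qed.

Lemma tfam_hereditary a E F : tfam lt An a E -> F `<=` E -> tfam lt An a F.
Proof.
move=> tE; elim: tE F => {a E}
  [a z|b a sba|b a n E sba tE IH|a la|a E b m la nE mE min_m inb tE IH] F.
- by rewrite fsubset0 => /eqP ->; apply: tfam0.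
- by rewrite fsubset0 => /eqP ->; apply: tfam0.
- move=> /fsubsetP FnE; have [nF|nF] := boolP (n \in F).
    rewrite -(fsetD1K nF); apply: tfam_succ sba (IH _ _).
    apply/fsubsetP => z; rewrite in_fsetD1 => /andP [zn /FnE].
    by rewrite !inE (negbTE zn).
  apply: tfam_succ_sub sba (IH _ _); apply/fsubsetP => z zF.
  by move: (FnE z zF); rewrite !inE; case: eqP => [zn|//]; rewrite -zn zF in nF.
- by rewrite fsubset0 => /eqP ->; apply: tfam0.
- move=> /fsubsetP FE; have [->|/fset_nat_min [m' m'F min_m']] := eqVneq F fset0.
    exact: tfam0.
  apply: (@tfam_limit _ _ _ _ _ b m' la) => //; last by apply/IH/fsubsetP.
  + by move=> F0; rewrite F0 inE in m'F.
  + exact: tf_data_mono la (min_m m' (FE m' m'F)) inb.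
Qed.

(* The levels [An m a] used at limit stages only grow with the minimum [m]. *)
Lemma tfam_exchange a E x y : tfam lt An a E -> x \in E -> y \notin E -> x < y ->
  tfam lt An a (y |` (E `\ x)).
Proof.
move=> tE; elim: tE x y => {a E}
  [a z|b a sba|b a n E sba tE IH|a la|a E b m la nE mE min_m inb tE IH] x y;
  rewrite ?inE // => xE yE xy.
- have yn : y != n by apply: contraNneq yE => ->; rewrite eqxx.
  have yE' : y \notin E by apply: contraNN yE => ->; rewrite orbT.
  have [xn|xn] := eqVneq x n.
    subst x; have [nE|nE] := boolP (n \in E).
      apply: tfam_succ_sub sba _; rewrite (_ : (n |` E) `\ n = E `\ n); first exact: IH.
      by apply/fsetP => z; rewrite !inE; case: (z =P n).
    by rewrite fsetU1K //; apply: tfam_succ sba tE.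
  have xE' : x \in E by move: xE; rewrite (negbTE xn).
  rewrite (_ : y |` _ = n |` (y |` (E `\ x))); first exact: tfam_succ sba (IH _ _ xE' yE' xy).
  apply/fsetP => z; rewrite !inE; case: (z =P y) => [->|]; first by rewrite (negbTE yn).
  by case: (z =P n) => [->|//]; rewrite eq_sym (negbTE xn).
- have nG : y |` (E `\ x) != fset0 by apply/fset0Pn; exists y; rewrite fset1U1.
  have [m' m'G min_m'] := fset_nat_min nG.
  apply: (@tfam_limit _ _ _ _ _ b m' la) => //; last exact: IH.
  + by move=> G0; rewrite G0 eqxx in nG.
  + apply: tf_data_mono la _ inb; move: m'G; rewrite !inE => /orP [/eqP ->|/andP [_ /min_m //]].
    exact: leq_trans (min_m x xE) (ltnW xy).
Qed.

Lemma tfam_zero_empty a E : tfam lt An a E -> is_zero lt a -> E = fset0.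
Proof.
case=> [a' _|b' a' _|b' a' n E' sba _|a' _|a' E' b m [nz _] _ _ _ _ _] z //.
by case: (z b' sba.1).
Qed.

Lemma tfam_succ_cases b a E : tfam lt An a E -> succ_of lt b a ->
  E = fset0 \/ exists n E', tfam lt An b E' /\ E = n |` E'.
Proof.
case=> [a' _|b' a' _|b' a' n E' sb'a tE'|a' _|a' E' b' m la _ _ _ _ _] sba; try by left.
- by right; exists n, E'; rewrite (succ_of_inj HO sba sb'a).
- by case: (succ_not_limit sba la).
Qed.

Lemma tfam_limit_cases a E : tfam lt An a E -> is_limit lt a ->
  E = fset0 \/ exists b m, [/\ m \in E, forall x, x \in E -> m <= x,
                               List.In b (An m a) & tfam lt An b E].
Proof.
case=> [a' _|b' a' _|b' a' n E' sb'a _|a' _|a' E' b m _ _ mE min_m inb tE] la; try by left.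
- by case: (succ_not_limit sb'a la).
- by right; exists b, m.
Qed.

(* [E] is [n |` E'] with [E'] in [F_b], but [n] need not be the minimum of [E];
   exchanging the minimum for [n] repairs this. *)
Lemma tfam_succ_min b a E m : tfam lt An a E -> succ_of lt b a -> m \in E ->
  (forall x, x \in E -> m <= x) -> tfam lt An b (E `\ m).
Proof.
move=> tE sba mE min_m; case: (tfam_succ_cases tE sba) => [E0|[n [E' [tE' E_nE']]]].
  by rewrite E0 inE in mE.
subst E; have [nE'|nE'] := boolP (n \in E').
  by apply: tfam_hereditary tE' _; apply/fsubsetP => z; rewrite !inE => /andP [_ /orP [/eqP ->|]].
have [->|mn] := eqVneq m n; first by rewrite fsetU1K.
have mE' : m \in E' by move: mE; rewrite !inE (negbTE mn).
have lt_mn : m < n by rewrite ltn_neqAle mn min_m // fset1U1.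
rewrite (_ : _ `\ m = n |` (E' `\ m)); first exact: tfam_exchange tE' mE' nE' lt_mn.
by apply/fsetP => z; rewrite !inE; case: (z =P n) => [->|] //=; rewrite eq_sym mn.
Qed.

Lemma tfam_limit_shift a d n0 E : is_limit lt a -> List.In d (An n0 a) ->
  tfam lt An d E -> tfam lt An a ((fun i => i + n0) @` E).
Proof.
move=> la ind tE.
have [->|/fset_nat_min [m mE min_m]] := eqVneq E fset0; first by rewrite imfset0; apply: tfam0.
apply: (@tfam_limit _ _ _ _ _ d (m + n0) la).
- by move/eqP; apply/negP/fset0Pn; exists (m + n0); apply: in_imfset.
- exact: in_imfset.
- by move=> _ /imfsetP [x /= xE ->]; rewrite leq_add2r min_m.
- by apply: tf_data_mono la _ ind; rewrite leq_addl.
- by apply: tfam_spreading tE => i j ij; rewrite ltn_add2r.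
Qed.

(* [F_b] has rank b + 1, i.e. its b-th derivative contains [fset0]; the
   statement is generalised over a fixed part [S] and a spreading [e] so that
   the induction goes through. *)
Lemma derived_tfam_spread b (e : nat -> nat) S (H : nfamily) :
  {homo e : i j / i < j} -> hereditary H ->
  (forall E, tfam lt An b E -> H (S `|` e @` E)) -> derived lt H b S.
Proof.
elim/(well_founded_ind (o1_wf HO)): b e S => a IHa e S incr_e herH HE.
have [z|[[b sba]|la]] := ordinal_cases lt a.
- by have := HE _ (tfam_zero An z); rewrite imfset0 fsetU0; apply: derived_zero.
- apply: (derived_succ sba).
    apply: (IHa _ sba.1 _ _ incr_e herH) => E tE.
    by apply: herH (HE _ (tfam_succ 0 sba tE)) _; rewrite imfsetU1 fsetUS // fsubsetUr.
  exists (range e); split; first exact: homo_ltn_range_infinite.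
  move=> _ [i _ <-]; apply: (IHa _ sba.1 _ _ incr_e herH) => E tE.
  by have := HE _ (tfam_succ i sba tE); rewrite imfsetU1 fsetUCA fsetUA.
apply: (derived_limit la) => c ca.
have [n0 cofinal] := (HAn la).2.2 c ca; have [d [ind cd]] := cofinal n0 (leqnn n0).
apply: (derived_lt HO (a := d)) cd.
apply: (IHa _ ((HAn la).1 n0 d ind) (fun i => e (i + n0)) _ _ herH).
  by move=> i j ij; apply: incr_e; rewrite ltn_add2r.
move=> E tE; have -> : [fset e (i + n0) | i in E] = e @` ((fun i => i + n0) @` E).
  by rewrite -imfset_comp.
exact/HE/(tfam_limit_shift la ind).
Qed.

End TransfiniteFamily.

Definition tail (e : nat -> nat) (k : nat) : set nat := (e @` [set i | k <= i])%classic.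

Section Dichotomy.
Variables (O : Type) (lt : O -> O -> Prop) (HO : is_omega1 lt).
Variables (An : nat -> O -> list O) (HAn : is_tf_data lt An).
Implicit Types (A : nfamily) (a b : O) (e : nat -> nat).

Definition tail_spread_sub A k e b :=
  forall E, tfam lt An b E -> (forall i, i \in E -> k <= i) -> A (e @` E).

Definition tail_thin A k e b := ~ derived lt (restrict A (tail e k)) b fset0.

Definition dichotomy b := forall A, hereditary A -> forall k e, {homo e : i j / i < j} ->
  exists e', refines k e e' /\ (tail_spread_sub A k e' b \/ tail_thin A k e' b).

Lemma tail_spread_sub_refines A k j e e' b : {homo e : i j / i < j} -> refines j e e' ->
  tail_spread_sub A k e b -> tail_spread_sub A k e' b.
Proof.
move=> incr_e [incr_e' sub_e' _] spread_e E tE geq_k.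
have [g incr_g e'_eg] := homo_ltn_factor incr_e incr_e' sub_e'.
have -> : e' @` E = e @` (g @` E) by rewrite -imfset_comp; apply: eq_imfset.
apply: spread_e; first exact: (tfam_spreading HAn incr_g tE).
by move=> _ /imfsetP [x /= xE ->]; apply: leq_trans (geq_k x xE) (homo_ltn_geq incr_g x).
Qed.

Lemma tail_refines k j e e' : {homo e : i j / i < j} -> refines j e e' ->
  (tail e' k `<=` tail e k)%classic.
Proof.
move=> incr_e [incr_e' sub_e' _] _ [i ki <-].
have [g incr_g e'_eg] := homo_ltn_factor incr_e incr_e' sub_e'.
by exists (g i); [apply: leq_trans ki (homo_ltn_geq incr_g i) | rewrite e'_eg].
Qed.

Lemma tail_thin_refines A k j e e' b : {homo e : i j / i < j} -> refines j e e' ->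
  tail_thin A k e b -> tail_thin A k e' b.
Proof.
move=> incr_e ee' thin_e d; apply/thin_e/(derived_subset HO _ d) => G [AG G_tail].
by split=> // y /G_tail /(tail_refines incr_e ee').
Qed.

Lemma tail_thin_empty A k e b : ~ A fset0 -> tail_thin A k e b.
Proof. by move=> nA0 /(derived_sub HO) []. Qed.

(* Restricting to points beyond [e j] does not affect derivatives at the empty
   set, so it does not matter where the tail starts. *)
Lemma tail_thin_lt A k j e b a : {homo e : i j / i < j} -> lt b a ->
  tail_thin A j e b -> tail_thin A k e a.
Proof.
move=> incr_e ba thin_j d_a; apply: thin_j.
apply: (derived_subset HO _ (derived_restrict_geq HO (K := e j) (derived_lt HO d_a ba) _)).
  move=> G [[AG G_tail] G_geq]; split=> // y yG; have [i ki ei_y] := G_tail y yG.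
  by exists i => //=; rewrite -(leq_mono incr_e) ei_y; apply: (G_geq _ yG).
by move=> y; rewrite inE.
Qed.

Lemma tail_thin_succ A k n0 e b a : {homo e : i j / i < j} -> succ_of lt b a ->
  (forall m, n0 <= m -> tail_thin (fun G => A (e m |` G)) m.+1 e b) ->
  tail_thin A k e a.
Proof.
move=> incr_e sba thin_m d_a; have [N infN ext] := derived_succ_ext HO d_a sba.
have [n Nn n0_n] := (infinite_natP N).1 infN (e n0); have d_n := ext n Nn.
have [_ /(_ n (fset1U1 _ _)) [i ki ei_n]] := derived_sub HO d_n.
apply: (thin_m i); first by rewrite -(leq_mono incr_e) ei_n.
apply: (derived_subset HO _ (derived_restrict_geq HO (K := n.+1) (derived_fsetU1 HO d_n) _)).
  move=> G [[AnG nG_tail] G_gt]; split; first by rewrite ei_n.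
  move=> y yG; have [l kl el_y] := nG_tail y (fset1Ur _ yG).
  by exists l => //=; rewrite -(leqW_mono (leq_mono incr_e)) ei_n el_y; apply: (G_gt _ yG).
by move=> y; rewrite inE.
Qed.

Lemma tail_spread_sub_succ A k e s b a : succ_of lt b a -> {homo s : i j / i < j} ->
  A fset0 -> (forall m, k <= m -> tail_spread_sub (fun G => A (e (s m) |` G)) (s m).+1 e b) ->
  tail_spread_sub A k (e \o s) a.
Proof.
move=> sba incr_s A0 spread_m E tE geq_k.
have [->|/fset_nat_min [m mE min_m]] := eqVneq E fset0; first by rewrite imfset0.
have -> : (e \o s) @` E = e (s m) |` e @` (s @` (E `\ m)).
  by rewrite -imfset_comp -imfsetU1 fsetD1K.
apply: (spread_m m (geq_k m mE)).
  exact: (tfam_spreading HAn incr_s (tfam_succ_min HO HAn tE sba mE min_m)).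
move=> i /imfsetP [x /=]; rewrite in_fsetD1 => /andP [xm xE] ->; apply: incr_s.
by rewrite ltn_neqAle eq_sym xm min_m.
Qed.

Lemma tail_spread_sub_limit A k e a : is_limit lt a -> A fset0 ->
  (forall j, k <= j -> forall b, List.In b (An j a) -> tail_spread_sub A j e b) ->
  tail_spread_sub A k e a.
Proof.
move=> la A0 spread_j E tE geq_k.
case: (tfam_limit_cases tE la) => [->|[b [m [mE min_m inb tbE]]]]; first by rewrite imfset0.
exact: spread_j m (geq_k m mE) b inb E tbE min_m.
Qed.

Lemma dichotomy_zero a : is_zero lt a -> dichotomy a.
Proof.
move=> z A _ k e incr_e; exists e; split; first exact: refines_refl.
have [A0|nA0] := pselect (A fset0); last by right; apply: tail_thin_empty.
by left => E tE _; rewrite (tfam_zero_empty tE z) imfset0.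
Qed.

Lemma dichotomy_succ b a : succ_of lt b a -> dichotomy b -> dichotomy a.
Proof.
move=> sba Db A herA k e incr_e.
have [A0|nA0] := pselect (A fset0); last first.
  by exists e; split; [apply: refines_refl | right; apply: tail_thin_empty].
pose Ax x G := A (x |` G).
have herAx x : hereditary (Ax x) by move=> E F AxE FE; apply: herA AxE _; apply: fsetUS.
pose Phi j e := tail_spread_sub (Ax (e j)) j.+1 e b \/ tail_thin (Ax (e j)) j.+1 e b.
have [e' [ee' Phi_e']] : exists e', refines k e e' /\ forall j, k <= j -> Phi j e'.
  apply: fusion incr_e => [j e1 e2 incr_e1 e12|j e1 incr_e1].
    have [_ _ agree] := e12; rewrite /Phi (agree j (ltnSn j)) => -[spread|thin].
      by left; apply: tail_spread_sub_refines incr_e1 e12 spread.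
    by right; apply: tail_thin_refines incr_e1 e12 thin.
  have [e2 [e12 spread_or_thin]] := Db (Ax (e1 j)) (herAx _) j.+1 e1 incr_e1.
  have [_ _ agree] := e12.
  by exists e2; split; [apply: refines_leq e12 | rewrite /Phi agree].
have [incr_e' _ _] := ee'.
pose good m := k <= m /\ tail_spread_sub (Ax (e' m)) m.+1 e' b.
have [/finite_nat_ub [n0 n0_ub]|inf_good] := pselect (finite_set (good : set nat)); last first.
  have [s incr_s [s_id s_good]] := increasing_into_from k inf_good.
  exists (e' \o s); split; first exact: refines_comp ee' incr_s s_id.
  by left; apply: tail_spread_sub_succ sba incr_s A0 _ => m /s_good [[]].
exists e'; split=> //; right; apply: (tail_thin_succ (n0 := maxn n0 k)) incr_e' sba _ => m.
rewrite geq_max => /andP [n0m km]; case: (Phi_e' m km) => // spread.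
by have := n0_ub m (conj km spread); rewrite ltnNge n0m.
Qed.

Lemma dichotomy_list A (L : seq O) : hereditary A -> (forall b, List.In b L -> dichotomy b) ->
  forall j e, {homo e : i j / i < j} -> exists e', refines j e e' /\
    ((forall b, List.In b L -> tail_spread_sub A j e' b) \/
     exists2 b, List.In b L & tail_thin A j e' b).
Proof.
move=> herA; elim: L => [|b L IHL] DL j e1 incr_e1.
  by exists e1; split; [apply: refines_refl | left].
have [e2 [e12 spread_or_thin2]] := DL b (or_introl erefl) A herA j e1 incr_e1.
have [incr_e2 _ _] := e12.
have [e3 [e23 spread_or_thin3]] := IHL (fun c cL => DL c (or_intror cL)) j e2 incr_e2.
exists e3; split; first exact: refines_trans e12 e23.
case: spread_or_thin2 => [spread2|thin2]; last first.
  by right; exists b; [left | apply: tail_thin_refines incr_e2 e23 thin2].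
case: spread_or_thin3 => [spread3|[c cL thin3]]; last by right; exists c; [right|].
by left => c [<-|/spread3]; [apply: tail_spread_sub_refines incr_e2 e23 spread2|].
Qed.

Lemma dichotomy_limit a : is_limit lt a -> (forall b, lt b a -> dichotomy b) -> dichotomy a.
Proof.
move=> la Db A herA k e incr_e.
have [A0|nA0] := pselect (A fset0); last first.
  by exists e; split; [apply: refines_refl | right; apply: tail_thin_empty].
pose Phi j e := (forall b, List.In b (An j a) -> tail_spread_sub A j e b) \/
                exists2 b, List.In b (An j a) & tail_thin A j e b.
have [e' [ee' Phi_e']] : exists e', refines k e e' /\ forall j, k <= j -> Phi j e'.
  apply: fusion incr_e => [j e1 e2 incr_e1 e12 [spread|[b inb thin]]|j e1 incr_e1].
  - by left => b inb; apply: tail_spread_sub_refines incr_e1 e12 (spread b inb).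
  - by right; exists b => //; apply: tail_thin_refines incr_e1 e12 thin.
  - by apply: dichotomy_list => // b inb; apply/Db/((HAn la).1 j).
have [incr_e' _ _] := ee'; exists e'; split=> //.
have [[j [kj [b inb thin]]]|no_thin] := pselect (exists j, k <= j /\
    exists2 b, List.In b (An j a) & tail_thin A j e' b).
  by right; apply: tail_thin_lt incr_e' ((HAn la).1 j b inb) thin.
left; apply: tail_spread_sub_limit la A0 _ => j kj.
by case: (Phi_e' j kj) => // thin; case: no_thin; exists j.
Qed.

Lemma dichotomy_all a : dichotomy a.
Proof.
elim/(well_founded_ind (o1_wf HO)): a => a IHa.
have [z|[[b sba]|la]] := ordinal_cases lt a.
- exact: dichotomy_zero.
- exact: dichotomy_succ sba (IHa b sba.1).
- exact: dichotomy_limit.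
Qed.

End Dichotomy.

Lemma restrict_hereditary A Q : hereditary A -> hereditary (restrict A Q).
Proof. by move=> herA E F [AE EQ] FE; split=> [|n /(fsubsetP FE)/EQ //]; apply: herA AE FE. Qed.

Section Corollary.
Variables (O : Type) (lt : O -> O -> Prop) (HO : is_omega1 lt).
Variables (An : nat -> O -> list O) (HAn : is_tf_data lt An).
Variables (A : nfamily) (herA : hereditary A) (a : O) (P : set nat).

Lemma large_CB_gt (Q : set nat) : fam_compact A -> large lt An A a P ->
  (Q `<=` P)%classic -> infinite_set Q -> CB_ge_succ lt (restrict A Q) a.
Proof.
move=> cA largeA QP infQ; have [N [NQ [infN spread_N]]] := largeA Q QP infQ.
have [e [incr_e rg_e]] := increasing_enumeration infN.
have d : derived lt (restrict A Q) a fset0.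
  apply: (derived_tfam_spread HO HAn incr_e (restrict_hereditary (Q := Q) herA)) => E tE.
  rewrite fset0U; split=> [|_ /imfsetP [i _ ->]]; last by apply: NQ; rewrite -rg_e; exists i.
  apply: spread_N; exists e; split=> //; split; last by exists E.
  by move=> m; rewrite -rg_e; split=> [[i _ <-]|[i <-]]; exists i.
exact: CB_ge_succ_derived HO cA (fun E (AQE : restrict A Q E) => AQE.1) d.
Qed.

Lemma CB_gt_large :
  (forall Q, (Q `<=` P)%classic -> infinite_set Q -> CB_ge_succ lt (restrict A Q) a) ->
  large lt An A a P.
Proof.
move=> CB_Q M MP infM; have [e [incr_e rg_e]] := increasing_enumeration infM.
have [e' [ee' spread_or_thin]] := dichotomy_all HO HAn a herA 0 incr_e.
have [incr_e' sub_e' _] := ee'.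
have e'M : (range e' `<=` M)%classic by move=> m /sub_e'; rewrite rg_e.
case: spread_or_thin => [spread|thin].
  exists (range e'); split=> //; split; first exact: homo_ltn_range_infinite.
  move=> _ [e0 [incr_e0 [rg_e0 [E [tE ->]]]]].
  have e'e0 : refines 0 e' e0 by split=> // _ [i _ <-]; apply/rg_e0; exists i.
  exact: (tail_spread_sub_refines HAn incr_e' e'e0 spread tE (fun i _ => leq0n i)).
have [g [[_ nonempty_g] ag]] := CB_Q _ (subset_trans e'M MP) (homo_ltn_range_infinite incr_e').
have [E dE] := nonempty_g a ag.
have d0 := derived_hereditary HO (restrict_hereditary herA) dE (fsub0set E).
case: thin; apply: (derived_subset HO _ d0) => G [AG G_e'].
by split=> // y /G_e' [i _ <-]; exists i.
Qed.

End Corollary.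

Theorem corollary5p6 (O : Type) (lt : O -> O -> Prop) (HO : is_omega1 lt)
  (An : nat -> O -> list O) (HAn : is_tf_data lt An)
  (A : nfamily) (Hher : hereditary A) (Hcpt : fam_compact A)
  (P : set nat) (HP : infinite_set P) (a : O) :
  large lt An A a P <->
  (forall Q : set nat, (Q `<=` P)%classic -> infinite_set Q ->
     CB_ge_succ lt (restrict A Q) a).
Proof.
split=> [largeA Q|]; first exact: (large_CB_gt HO HAn Hher Hcpt largeA).
exact: (CB_gt_large HO HAn Hher).
Qed.
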